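(* Let $L^\bullet$ be a generalized operator algebra with the Fredholm property, and assume: (a) whenever $A=A^*\in L^0((g,g))$ is a Fredholm operator on $H(g)$, the orthogonal projection onto $\ker A$ belongs to $L^{-\infty}((g,g))$; (b) $R_1TR_0\in L^{-\infty}((g,g))$ whenever $R_0,R_1\in L^{-\infty}((g,g))$ and $T\in\mathcal L(H(g))$. Then $L^\bullet$ has the extended Fredholm property.
   Context: Generalized operator algebra $L^\bullet$: a set $G$ of weights; to each $g\in G$ a Hilbert space $H(g)$ (some weight has $H(g)=\{0\}$); for each pair $\mathfrak g=(g^0,g^1)$ vector spaces $L^{-\infty}(\mathfrak g)\subset L^0(\mathfrak g)\subset\mathcal L(H(g^0),H(g^1))$ such that elements of $L^{-\infty}(\mathfrak g)$ (smoothing operators) are compact, the identity lies in $L^0((g,g))$, composition maps $L^\mu((g^1,g^2))\times L^\nu((g^0,g^1))\to L^{\mu+\nu}((g^0,g^2))$ for $\mu,\nu\in\{0,-\infty\}$, and the Hilbert space adjoint of $A\in L^\mu((g^0,g^1))$ lies in $L^\mu((g^1,g^0))$. A parametrix of $A\in L^0((g^0,g^1))$ is $B\in L^0((g^1,g^0))$ with $AB-1$, $BA-1$ smoothing. Fredholm property: every $A\in L^0((g^0,g^1))$ has a parametrix iff it is Fredholm. Extended Fredholm property: the Fredholm property holds and every selfadjoint $A\in L^0((g,g))$ that is Fredholm on $H(g)$ has a parametrix $B\in L^0((g,g))$ with $AB=BA=1-\pi$, $\pi$ the orthogonal projection onto $\ker A$. *)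

From HB Require Import structures.
From mathcomp Require Import all_boot all_order all_algebra.
From mathcomp Require Import reals.
From mathcomp Require Import complex.
Set Implicit Arguments. Unset Strict Implicit. Unset Printing Implicit Defensive.
Import Order.TTheory GRing.Theory Num.Theory ComplexField.
Local Open Scope ring_scope.

Section Hilbert.
Variable R : realType.

Definition inorm (V : lmodType R[i]) (ip : V -> V -> R[i]) (x : V) : R :=
  Num.sqrt (complex.Re (ip x x)).

Definition ip_cauchy (V : lmodType R[i]) (ip : V -> V -> R[i]) (u : nat -> V) :=
  forall e : R, 0 < e -> exists N : nat, forall m n : nat, (N <= m)%N -> (N <= n)%N ->
    inorm ip (u m - u n) < e.

Definition ip_converges (V : lmodType R[i]) (ip : V -> V -> R[i]) (u : nat -> V) (l : V) :=
  forall e : R, 0 < e -> exists N : nat, forall n : nat, (N <= n)%N -> inorm ip (u n - l) < e.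

Record hilbert := Hilbert {
  hcar :> lmodType R[i];
  hinner : hcar -> hcar -> R[i];
  hinner_linl : forall (a : R[i]) (x y z : hcar),
      hinner (a *: x + y) z = a * hinner x z + hinner y z;
  hinner_conj : forall x y : hcar, hinner y x = (hinner x y)^*;
  hinner_ge0 : forall x : hcar, 0 <= hinner x x;
  hinner_eq0 : forall x : hcar, hinner x x = 0 -> x = 0;
  hcomplete : forall u : nat -> hcar, ip_cauchy hinner u ->
      exists l : hcar, ip_converges hinner u l
}.

Definition hnorm (H : hilbert) (x : H) : R := inorm (@hinner H) x.

Definition bounded_op (H0 H1 : hilbert) (A : H0 -> H1) : Prop :=
  (forall (a : R[i]) (x y : H0), A (a *: x + y) = a *: A x + A y) /\
  exists M : R, forall x : H0, hnorm (A x) <= M * hnorm x.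

Definition compact_op (H0 H1 : hilbert) (A : H0 -> H1) : Prop :=
  bounded_op A /\
  forall u : nat -> H0, (exists M : R, forall n, hnorm (u n) <= M) ->
    exists (phi : nat -> nat) (l : H1),
      (forall n, (phi n < phi n.+1)%N) /\ ip_converges (@hinner H1) (fun n => A (u (phi n))) l.

Definition is_adjoint (H0 H1 : hilbert) (A : H0 -> H1) (B : H1 -> H0) : Prop :=
  forall (x : H0) (y : H1), hinner (A x) y = hinner x (B y).

Definition fredholm (H0 H1 : hilbert) (A : H0 -> H1) : Prop :=
  bounded_op A /\
  (exists (n : nat) (e : 'I_n -> H0), forall x : H0, A x = 0 ->
      exists c : 'I_n -> R[i], x = \sum_(k < n) c k *: e k) /\
  (exists (n : nat) (e : 'I_n -> H1), forall y : H1,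
      exists (x : H0) (c : 'I_n -> R[i]), y = A x + \sum_(k < n) c k *: e k).

Definition orth_proj_ker (H0 H1 : hilbert) (A : H0 -> H1) (P : H0 -> H0) : Prop :=
  forall x : H0, A (P x) = 0 /\ forall z : H0, A z = 0 -> hinner (x - P x) z = 0.

End Hilbert.

(* Generalized operator algebra.  L0 g0 g1 = L^0((g0,g1)), Linf g0 g1 = L^{-oo}((g0,g1)). *)
Record GOA (R : realType) := MkGOA {
  weight : Type;
  Hs : weight -> hilbert R;
  L0 : forall g0 g1 : weight, (Hs g0 -> Hs g1) -> Prop;
  Linf : forall g0 g1 : weight, (Hs g0 -> Hs g1) -> Prop;
  trivial_weight : exists g : weight, forall x : Hs g, x = 0;
  L0_zero : forall g0 g1, L0 (fun _ : Hs g0 => (0 : Hs g1));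
  L0_lin : forall g0 g1 (a : R[i]) (A B : Hs g0 -> Hs g1),
      L0 A -> L0 B -> L0 (fun x => a *: A x + B x);
  Linf_zero : forall g0 g1, Linf (fun _ : Hs g0 => (0 : Hs g1));
  Linf_lin : forall g0 g1 (a : R[i]) (A B : Hs g0 -> Hs g1),
      Linf A -> Linf B -> Linf (fun x => a *: A x + B x);
  Linf_L0 : forall g0 g1 (A : Hs g0 -> Hs g1), Linf A -> L0 A;
  L0_bounded : forall g0 g1 (A : Hs g0 -> Hs g1), L0 A -> bounded_op A;
  Linf_compact : forall g0 g1 (A : Hs g0 -> Hs g1), Linf A -> compact_op A;
  L0_id : forall g, L0 (fun x : Hs g => x);
  (* composition L^mu x L^nu -> L^(mu+nu) *)
  comp_00 : forall g0 g1 g2 (A : Hs g1 -> Hs g2) (B : Hs g0 -> Hs g1),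
      L0 A -> L0 B -> L0 (fun x => A (B x));
  comp_0inf : forall g0 g1 g2 (A : Hs g1 -> Hs g2) (B : Hs g0 -> Hs g1),
      L0 A -> Linf B -> Linf (fun x => A (B x));
  comp_inf0 : forall g0 g1 g2 (A : Hs g1 -> Hs g2) (B : Hs g0 -> Hs g1),
      Linf A -> L0 B -> Linf (fun x => A (B x));
  comp_infinf : forall g0 g1 g2 (A : Hs g1 -> Hs g2) (B : Hs g0 -> Hs g1),
      Linf A -> Linf B -> Linf (fun x => A (B x));
  adj_L0 : forall g0 g1 (A : Hs g0 -> Hs g1), L0 A ->
      exists B : Hs g1 -> Hs g0, L0 B /\ is_adjoint A B;
  adj_Linf : forall g0 g1 (A : Hs g0 -> Hs g1), Linf A ->
      exists B : Hs g1 -> Hs g0, Linf B /\ is_adjoint A B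
}.

Section GOAdefs.
Variables (R : realType) (L : GOA R).

Definition parametrix (g0 g1 : weight L) (A : Hs g0 -> Hs g1) (B : Hs g1 -> Hs g0) : Prop :=
  L0 B /\ Linf (fun y => A (B y) - y) /\ Linf (fun x => B (A x) - x).

Definition fredholm_property : Prop :=
  forall (g0 g1 : weight L) (A : Hs g0 -> Hs g1), L0 A ->
    ((exists B, parametrix A B) <-> fredholm A).

Definition extended_fredholm_property : Prop :=
  fredholm_property /\
  forall (g : weight L) (A : Hs g -> Hs g),
    L0 A -> is_adjoint A A -> fredholm A ->
    exists (B : Hs g -> Hs g) (pi : Hs g -> Hs g),
      orth_proj_ker A pi /\ L0 B /\
      (forall x, A (B x) = x - pi x) /\ (forall x, B (A x) = x - pi x).

End GOAdefs.

From mathcomp Require Import all_boot all_order all_algebra.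
From mathcomp Require Import reals complex.
From mathcomp Require Import ring lra.
From mathcomp Require Import boolp classical_sets.
Set Implicit Arguments. Unset Strict Implicit. Unset Printing Implicit Defensive.
Import Order.TTheory GRing.Theory Num.Theory ComplexField.
Local Open Scope ring_scope.
Local Notation "x %:C" := (real_complex _ x) (format "x %:C").

(* Let pi be the orthogonal projection onto ker A; it is smoothing by (a).
   E = A + pi is self-adjoint and injective, and every parametrix B0 of A is
   one of E.  Compactness of B0 E - 1 makes E bounded below, so its range is
   closed; a self-adjoint injective operator with closed range is onto.  Its
   bounded inverse G satisfies G = B0 - K1 B0 + K1 G K2 with K1 = B0 E - 1 and
   K2 = E B0 - 1 smoothing, hence G is in L^0 by (b), and G - pi inverts A
   modulo pi. *)

Section InnerProduct.
Variables (R : realType) (H : hilbert R).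
Implicit Types (x y z : H) (a : R[i]).
Local Notation ip := (@hinner R H).

Lemma hinnerDl x y z : ip (x + y) z = ip x z + ip y z.
Proof. by rewrite -[x + y](congr1 (+%R^~ y) (scale1r x)) hinner_linl mul1r. Qed.

Lemma hinner0l z : ip 0 z = 0.
Proof. by apply: (@addrI _ (ip 0 z)); rewrite addr0 -hinnerDl addr0. Qed.

Lemma hinnerZl a x z : ip (a *: x) z = a * ip x z.
Proof. by rewrite -[a *: x]addr0 hinner_linl hinner0l addr0. Qed.

Lemma hinnerNl x z : ip (- x) z = - ip x z.
Proof. by rewrite -scaleN1r hinnerZl mulN1r. Qed.

Lemma hinnerBl x y z : ip (x - y) z = ip x z - ip y z.
Proof. by rewrite hinnerDl hinnerNl. Qed.

Lemma hinnerDr x y z : ip z (x + y) = ip z x + ip z y.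
Proof. by rewrite !(hinner_conj _ z) hinnerDl rmorphD. Qed.

Lemma hinnerZr a x z : ip z (a *: x) = a^* * ip z x.
Proof. by rewrite !(hinner_conj _ z) hinnerZl rmorphM. Qed.

Lemma hinner0r z : ip z 0 = 0.
Proof. by rewrite hinner_conj hinner0l rmorph0. Qed.

Lemma hinnerNr x z : ip z (- x) = - ip z x.
Proof. by rewrite !(hinner_conj _ z) hinnerNl rmorphN. Qed.

Definition hsqnorm x : R := complex.Re (ip x x).

Lemma hinnerxx x : ip x x = (hsqnorm x)%:C.
Proof.
have := hinner_ge0 x; rewrite /hsqnorm; case: (ip x x) => a b.
by rewrite lecE /= => /andP[/eqP -> _].
Qed.

Lemma hsqnorm_ge0 x : 0 <= hsqnorm x.
Proof. by have := hinner_ge0 x; rewrite lecE => /andP[_]. Qed.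

Lemma hsqnorm_eq0 x : hsqnorm x = 0 -> x = 0.
Proof. by move=> h; apply: hinner_eq0; rewrite hinnerxx h. Qed.

Lemma hsqnormD x y : hsqnorm (x + y) = hsqnorm x + hsqnorm y + 2 * complex.Re (ip x y).
Proof.
rewrite /hsqnorm hinnerDl !hinnerDr (hinner_conj x y).
by case: (ip x x) => ??; case: (ip y y) => ??; case: (ip x y) => ??; rewrite /=; ring.
Qed.

Lemma hsqnormN x : hsqnorm (- x) = hsqnorm x.
Proof. by rewrite /hsqnorm hinnerNl hinnerNr opprK. Qed.

Lemma hsqnormB x y : hsqnorm (x - y) = hsqnorm x + hsqnorm y - 2 * complex.Re (ip x y).
Proof. by rewrite hsqnormD hsqnormN hinnerNr; case: (ip x y) => ??; rewrite /=; ring. Qed.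

Lemma hsqnormZ a x :
  hsqnorm (a *: x) = (complex.Re a ^+ 2 + complex.Im a ^+ 2) * hsqnorm x.
Proof. by rewrite /hsqnorm hinnerZl hinnerZr hinnerxx; case: a => ??; rewrite /=; ring. Qed.

(* Cauchy-Schwarz, from [0 <= |x - t y|^2] at the minimizing real [t] *)
Lemma Re_hinner_sqr_le x y : complex.Re (ip x y) ^+ 2 <= hsqnorm x * hsqnorm y.
Proof.
have [y0|yn0] := eqVneq (hsqnorm y) 0.
  by rewrite y0 (hsqnorm_eq0 y0) hinner0r /= mulr0 expr2 mulr0.
have y_gt0 : 0 < hsqnorm y by rewrite lt_def yn0 hsqnorm_ge0.
set r := complex.Re (ip x y); set t := r / hsqnorm y.
have := hsqnorm_ge0 (x - t%:C *: y).
rewrite hsqnormB hsqnormZ hinnerZr /= expr0n addr0 -/r.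
have -> : complex.Re ((t%:C)^* * ip x y) = t * r.
  by rewrite /r; case: (ip x y) => ??; rewrite /=; ring.
have tr : t * hsqnorm y = r by rewrite /t mulfVK ?gt_eqF.
have := hsqnorm_ge0 x; nra.
Qed.

Lemma hnormE x : hnorm x = Num.sqrt (hsqnorm x).
Proof. by []. Qed.

Lemma hnorm_ge0 x : 0 <= hnorm x.
Proof. exact: sqrtr_ge0. Qed.

Lemma hnorm_sqr x : hnorm x ^+ 2 = hsqnorm x.
Proof. by rewrite hnormE sqr_sqrtr // hsqnorm_ge0. Qed.

Lemma hnorm_eq0 x : hnorm x = 0 -> x = 0.
Proof. by move=> h; apply: hsqnorm_eq0; rewrite -hnorm_sqr h expr2 mulr0. Qed.

Lemma hnorm0 : hnorm (0 : H) = 0.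
Proof. by rewrite hnormE /hsqnorm hinner0l sqrtr0. Qed.

Lemma hnormN x : hnorm (- x) = hnorm x.
Proof. by rewrite !hnormE hsqnormN. Qed.

Lemma hnormBC x y : hnorm (x - y) = hnorm (y - x).
Proof. by rewrite -hnormN opprB. Qed.

Lemma hnormZ (r : R) x : hnorm (r%:C *: x) = `|r| * hnorm x.
Proof. by rewrite !hnormE hsqnormZ /= expr0n addr0 sqrtrM ?sqr_ge0 // sqrtr_sqr. Qed.

Lemma Re_hinner_le x y : complex.Re (ip x y) <= hnorm x * hnorm y.
Proof.
have := Re_hinner_sqr_le x y; rewrite -!hnorm_sqr -exprMn.
have := mulr_ge0 (hnorm_ge0 x) (hnorm_ge0 y); move: (_ * _) => p; nra.
Qed.

Lemma ler_hnormD x y : hnorm (x + y) <= hnorm x + hnorm y.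
Proof.
have := hnorm_sqr (x + y); rewrite hsqnormD -!hnorm_sqr.
have := Re_hinner_le x y; have := hnorm_ge0 x; have := hnorm_ge0 y.
have := hnorm_ge0 (x + y); move: (hnorm x) (hnorm y) (hnorm (x + y)) => a b c; nra.
Qed.

Lemma ler_hnormB x y z : hnorm (x - z) <= hnorm (x - y) + hnorm (y - z).
Proof. by rewrite -[x - z](subrKA y) ler_hnormD. Qed.

Lemma hnorm_apollonius x s t :
  hnorm (s - t) ^+ 2 = 2 * hnorm (x - s) ^+ 2 + 2 * hnorm (x - t) ^+ 2
                       - 4 * hnorm (x - (2^-1)%:C *: (s + t)) ^+ 2.
Proof.
have half_sum : x - (2^-1)%:C *: (s + t) = (2^-1)%:C *: ((x - t) + (x - s)).
  apply/esym; rewrite addrACA -opprD scalerDr scalerN [t + s]addrC; congr (_ - _).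
  have h2 : (2^-1 : R) + 2^-1 = 1 by field.
  by rewrite scalerDr -scalerDl -rmorphD h2 rmorph1 scale1r.
have -> : s - t = (x - t) - (x - s) by rewrite opprB [RHS]addrC addrA subrK.
rewrite half_sum !hnorm_sqr hsqnormZ /= expr0n addr0.
move: (x - t) (x - s) => a b; rewrite hsqnormB hsqnormD.
by field.
Qed.

End InnerProduct.

Lemma eventually_inv_lt (R : realType) (e : R) :
  0 < e -> exists k, forall n, (k <= n)%N -> n.+1%:R^-1 < e.
Proof.
move=> e0; have [k hk] := ltr_add_invr e0; rewrite add0r in hk.
by exists k => n kn; apply: le_lt_trans hk; rewrite lef_pV2 ?ler_nat ?posrE ?ltr0n.
Qed.

Section Convergence.
Variables (R : realType) (H : hilbert R).
Implicit Types (u v : nat -> H) (l m : H).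

Definition hcvg u l := ip_converges (@hinner R H) u l.
Definition hcauchy u := ip_cauchy (@hinner R H) u.

Lemma hcvgP u l : hcvg u l <->
  forall e, 0 < e -> exists k, forall n, (k <= n)%N -> hnorm (u n - l) < e.
Proof. by []. Qed.

Lemma hcvg_unique u l m : hcvg u l -> hcvg u m -> l = m.
Proof.
move=> /hcvgP ul /hcvgP um; apply/eqP; rewrite -subr_eq0; apply/eqP/hnorm_eq0.
apply/eqP; rewrite eq_le hnorm_ge0 andbT; apply: gt_ge => e e0.
have e2 : 0 < e / 2 by rewrite divr_gt0.
have [k1 hk1] := ul _ e2; have [k2 hk2] := um _ e2; set n := maxn k1 k2.
have := hk1 n (leq_maxl _ _); have := hk2 n (leq_maxr _ _).
have := ler_hnormB l (u n) m; rewrite (hnormBC l (u n)); have := splitr e; lra.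
Qed.

Lemma hcvg_subseq u l (phi : nat -> nat) : (forall n, (phi n < phi n.+1)%N) ->
  hcvg u l -> hcvg (u \o phi) l.
Proof.
move=> phi_incr /hcvgP ul; apply/hcvgP => e e0; have [k hk] := ul e e0.
have phi_ge n : (n <= phi n)%N by elim: n => // n ih; apply: leq_ltn_trans ih _.
by exists k => n kn; apply/hk/(leq_trans kn).
Qed.

Lemma hcvg_cst l : hcvg (fun=> l) l.
Proof. by apply/hcvgP => e e0; exists 0%N => n _; rewrite subrr hnorm0. Qed.

Lemma hcvgD u v l m : hcvg u l -> hcvg v m -> hcvg (fun n => u n + v n) (l + m).
Proof.
move=> /hcvgP ul /hcvgP vm; apply/hcvgP => e e0; have e2 : 0 < e / 2 by rewrite divr_gt0.
have [k1 hk1] := ul _ e2; have [k2 hk2] := vm _ e2.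
exists (maxn k1 k2) => n kn; rewrite opprD addrACA.
have := hk1 n (leq_trans (leq_maxl _ _) kn); have := hk2 n (leq_trans (leq_maxr _ _) kn).
have := ler_hnormD (u n - l) (v n - m); have := splitr e; lra.
Qed.

Lemma hcvgN u l : hcvg u l -> hcvg (fun n => - u n) (- l).
Proof.
move=> /hcvgP ul; apply/hcvgP => e e0; have [k hk] := ul _ e0.
by exists k => n kn; rewrite -opprD hnormN hk.
Qed.

Lemma hcvg_to0 u :
  (forall e, 0 < e -> exists k, forall n, (k <= n)%N -> hnorm (u n) < e) -> hcvg u 0.
Proof. by move=> h; apply/hcvgP => e /h [k hk]; exists k => n /hk; rewrite subr0. Qed.

End Convergence.

Section Projection.
Variables (R : realType) (H : hilbert R) (S : H -> Prop).
Hypothesis S0 : S 0.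
Hypothesis S_lin : forall a x y, S x -> S y -> S (a *: x + y).
Hypothesis S_closed : forall u l, (forall n, S (u n)) -> hcvg u l -> S l.
Local Notation ip := (@hinner R H).

(* Perturb [p] by [t s] with [t = r <x - p, s>] and [r = 1 / (|s|^2 + 1)]:
   minimality forces [0 <= r |<x - p, s>|^2 (r |s|^2 - 2)] with [r |s|^2 < 1]. *)
Lemma best_approximation_orthogonal x p : S p ->
  (forall s, S s -> hnorm (x - p) <= hnorm (x - s)) ->
  forall s, S s -> ip (x - p) s = 0.
Proof.
move=> Sp p_min s Ss; set w := x - p.
set r := (hsqnorm s + 1)^-1.
have s_ge0 := hsqnorm_ge0 s.
have r_gt0 : 0 < r by rewrite invr_gt0; lra.
have rs : r * (hsqnorm s + 1) = 1 by rewrite mulVf //; apply/eqP; lra.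
set t := r%:C * ip w s.
have := p_min (t *: s + p) (S_lin _ Ss Sp).
rewrite opprD addrA addrAC -/w !hnormE ler_sqrt ?hsqnorm_ge0 //.
rewrite (hsqnormB w) hsqnormZ hinnerZr /t.
case: (ip w s) => a1 a2 /= h.
have h' : 0 <= r * ((a1 ^+ 2 + a2 ^+ 2) * (r * hsqnorm s) - 2 * (a1 ^+ 2 + a2 ^+ 2)) by nra.
rewrite pmulr_rge0 // in h'.
have a_sqr0 : a1 ^+ 2 + a2 ^+ 2 = 0.
  have rs1 : r * hsqnorm s = 1 - r by lra.
  rewrite rs1 in h'.
  have := sqr_ge0 a1; have := sqr_ge0 a2; move: (a1 ^+ 2) (a2 ^+ 2) h' => u v; nra.
have a1_0 : a1 = 0 by have := sqr_ge0 a1; have := sqr_ge0 a2; nra.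
have a2_0 : a2 = 0 by have := sqr_ge0 a1; have := sqr_ge0 a2; nra.
by rewrite a1_0 a2_0.
Qed.

(* With [del = e^2 / (8d + 4 + e^2)], Apollonius' identity and the bound
   [d <= |x - mid|] give [|s_m - s_n|^2 < 4 (d + del)^2 - 4 d^2 <= e^2]. *)
Lemma minimizing_sequence_cauchy x d (s : nat -> H) : 0 <= d ->
  (forall t, S t -> d <= hnorm (x - t)) ->
  (forall n, S (s n) /\ hnorm (x - s n) < d + n.+1%:R^-1) ->
  hcauchy s.
Proof.
move=> d_ge0 d_lb s_min e e_gt0.
change (exists k, forall m n, (k <= m)%N -> (k <= n)%N -> hnorm (s m - s n) < e).
set del := e ^+ 2 / (8 * d + 4 + e ^+ 2).
have den_gt0 : 0 < 8 * d + 4 + e ^+ 2 by have := sqr_ge0 e; lra.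
have del_gt0 : 0 < del by rewrite divr_gt0 // exprn_gt0.
have del_eq : del * (8 * d + 4 + e ^+ 2) = e ^+ 2 by rewrite mulfVK // gt_eqF.
have del_le1 : del <= 1.
  by rewrite -(ler_pM2r den_gt0) del_eq mul1r; have := sqr_ge0 e; lra.
have [k hk] := eventually_inv_lt del_gt0.
exists k => m n km kn.
have [Sm hm] := s_min m; have [Sn hn] := s_min n.
have Smid : S ((2^-1)%:C *: (s m + s n)).
  by rewrite -[_ *: _]addr0; apply: S_lin S0; rewrite -[s m]scale1r; apply: S_lin.
have apo := hnorm_apollonius x (s m) (s n).
have c_ge := d_lb _ Smid; have am_ge := d_lb _ Sm; have an_ge := d_lb _ Sn.
have dmn_ge0 := hnorm_ge0 (s m - s n).
have im_lt := hk m km; have in_lt := hk n kn.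
move: apo c_ge am_ge an_ge dmn_ge0 hm hn im_lt in_lt.
move: (hnorm (s m - s n)) (hnorm (x - s m)) (hnorm (x - s n)) (hnorm (x - _ *: _)).
move: (m.+1%:R^-1 : R) (n.+1%:R^-1 : R) => im in_ dmn am an c.
move=> apo c_ge am_ge an_ge dmn_ge0 hm hn im_lt in_lt.
have h_am : am ^+ 2 < (d + del) ^+ 2 by nra.
have h_an : an ^+ 2 < (d + del) ^+ 2 by nra.
have h_c : d ^+ 2 <= c ^+ 2 by nra.
have h_e : 0 < del * e ^+ 2 by rewrite mulr_gt0 // exprn_gt0.
nra.
Qed.

Lemma orthogonal_projection_exists x :
  exists p, S p /\ forall s, S s -> ip (x - p) s = 0.
Proof.
pose D : set R := fun r => exists s, S s /\ r = hnorm (x - s).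
have D_n0 : D (hnorm (x - 0)) by exists 0.
have D_lb : has_lbound D by exists 0 => r [s [_ ->]]; exact: hnorm_ge0.
set d := inf D.
have d_lb s : S s -> d <= hnorm (x - s) by move=> Ss; apply: (ge_inf D_lb); exists s.
have d_ge0 : 0 <= d by apply: lb_le_inf (ex_intro _ _ D_n0) _ => r [s [_ ->]]; exact: hnorm_ge0.
have near_inf n : exists s, S s /\ hnorm (x - s) < d + n.+1%:R^-1.
  have [|r [s [Ss ->]] lt] := inf_lt (ex_intro _ _ D_n0) (x := d + n.+1%:R^-1).
    by rewrite ltrDl invr_gt0 ltr0n.
  by exists s.
have [s s_min] := choice near_inf.
have [p hp] := hcomplete (minimizing_sequence_cauchy d_ge0 d_lb s_min).
have Sp : S p := S_closed (fun n => (s_min n).1) hp.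
exists p; split => //; apply: best_approximation_orthogonal => // t St.
apply: le_trans (d_lb _ St); apply/ler_addgt0Pr => e e_gt0.
have e2 : 0 < e / 2 by rewrite divr_gt0.
have [k1 hk1] := eventually_inv_lt e2; have [k2 hk2] := (hcvgP s p).1 hp _ e2.
set n := maxn k1 k2.
have := hk1 n (leq_maxl _ _); have := hk2 n (leq_maxr _ _).
have := ler_hnormB x (s n) p; have := (s_min n).2; have := splitr e.
move: (hnorm (x - p)) (hnorm (x - s n)) (hnorm (s n - p)) (n.+1%:R^-1 : R) => a b c i; lra.
Qed.

End Projection.

Section BoundedOperator.
Variables (R : realType) (H0 H1 : hilbert R) (T : H0 -> H1).
Hypothesis T_bounded : bounded_op T.

Lemma bounded_opP a x y : T (a *: x + y) = a *: T x + T y.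
Proof. by case: T_bounded => h _; apply: h. Qed.

Lemma bounded_op0 : T 0 = 0.
Proof.
have := bounded_opP 1 0 0; rewrite !scale1r addr0 => T00.
by apply: (@addrI _ (T 0)); rewrite addr0 -T00.
Qed.

Lemma bounded_opD x y : T (x + y) = T x + T y.
Proof. by rewrite -[x in LHS]scale1r bounded_opP scale1r. Qed.

Lemma bounded_opZ a x : T (a *: x) = a *: T x.
Proof. by rewrite -[a *: x]addr0 bounded_opP bounded_op0 addr0. Qed.

Lemma bounded_opN x : T (- x) = - T x.
Proof. by rewrite -scaleN1r bounded_opZ scaleN1r. Qed.

Lemma bounded_opB x y : T (x - y) = T x - T y.
Proof. by rewrite bounded_opD bounded_opN. Qed.

Lemma bounded_op_pos_bound : exists M, 0 < M /\ forall x, hnorm (T x) <= M * hnorm x.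
Proof.
case: T_bounded => _ [M hM]; exists (`|M| + 1); split; first by have := normr_ge0 M; lra.
move=> x; apply: le_trans (hM x) _; have := hnorm_ge0 x; have := ler_norm M.
move: (hnorm x) => a; nra.
Qed.

Lemma bounded_op_cvg u l : hcvg u l -> hcvg (T \o u) (T l).
Proof.
move=> /hcvgP ul; apply/hcvgP => e e_gt0; have [M [M_gt0 hM]] := bounded_op_pos_bound.
have [k hk] := ul _ (divr_gt0 e_gt0 M_gt0); exists k => n kn.
rewrite /= -bounded_opB; apply: le_lt_trans (hM _) _.
by rewrite -ltr_pdivlMl // mulrC hk.
Qed.

End BoundedOperator.

Section BoundedBelow.
Variables (R : realType) (H0 H1 : hilbert R) (E : H0 -> H1).
Hypothesis E_bounded : bounded_op E.

Definition bounded_below := exists c, 0 < c /\ forall x, c * hnorm x <= hnorm (E x).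

Lemma not_bounded_below_unit_seq : ~ bounded_below ->
  exists u : nat -> H0, forall n, hnorm (u n) = 1 /\ hnorm (E (u n)) < n.+1%:R^-1.
Proof.
move=> not_bb.
suff /choice [u hu] : forall n, exists x, hnorm x = 1 /\ hnorm (E x) < n.+1%:R^-1.
  by exists u.
move=> n; apply: contrapT => no_unit; apply: not_bb.
exists n.+1%:R^-1; split=> [|x]; first by rewrite invr_gt0 ltr0n.
have [->|x_neq0] := eqVneq x 0; first by rewrite hnorm0 mulr0 hnorm_ge0.
have x_gt0 : 0 < hnorm x.
  by rewrite lt_def hnorm_ge0 andbT; apply: contra x_neq0 => /eqP /hnorm_eq0 ->.
set y := (hnorm x)^-1%:C *: x.
have y_unit : hnorm y = 1 by rewrite hnormZ ger0_norm ?invr_ge0 ?hnorm_ge0 // mulVf // gt_eqF.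
have Ey : hnorm (E y) = (hnorm x)^-1 * hnorm (E x).
  by rewrite bounded_opZ // hnormZ ger0_norm // invr_ge0 hnorm_ge0.
have : ~ hnorm (E y) < n.+1%:R^-1 by move=> lt; apply: no_unit; exists y.
move/negP; rewrite -leNgt Ey => h.
apply: le_trans (ler_wpM2r (ltW x_gt0) h) _.
by rewrite mulrAC mulVf ?mul1r // gt_eqF.
Qed.

(* A unit sequence with [E u_n -> 0] has, by compactness of [BE - 1],
   a subsequence converging to a unit vector in the kernel of [E]. *)
Lemma bounded_below_of_compact_left_parametrix (B : H1 -> H0) :
  bounded_op B -> (forall x, E x = 0 -> x = 0) ->
  compact_op (fun x => B (E x) - x) -> bounded_below.
Proof.
move=> B_bounded E_inj [_ K_compact]; apply: contrapT.
move=> /not_bounded_below_unit_seq [u u_unit].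
have [phi [l [phi_incr Ku_cvg]]] : exists phi l, (forall n, (phi n < phi n.+1)%N) /\
    hcvg (fun n => B (E (u (phi n))) - u (phi n)) l.
  by apply: K_compact; exists 1 => n; rewrite (u_unit n).1.
have Eu_cvg : hcvg (E \o u) 0.
  apply: hcvg_to0 => e /eventually_inv_lt [k hk]; exists k => n kn.
  exact: lt_trans (u_unit n).2 (hk n kn).
have BEu_cvg : hcvg (B \o E \o u \o phi) 0.
  rewrite -(bounded_op0 B_bounded).
  exact: (bounded_op_cvg B_bounded (hcvg_subseq phi_incr Eu_cvg)).
have u_cvg : hcvg (u \o phi) (- l).
  have := hcvgD BEu_cvg (hcvgN Ku_cvg); rewrite add0r.
  by congr hcvg; apply: funext => n /=; rewrite opprB addrC subrK.
have l0 : - l = 0.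
  apply: E_inj; apply: hcvg_unique (bounded_op_cvg E_bounded u_cvg) _.
  exact: (hcvg_subseq phi_incr Eu_cvg).
have [k hk] := (hcvgP _ _).1 u_cvg _ ltr01.
by have := hk k (leqnn k); rewrite l0 subr0 /= (u_unit (phi k)).1 ltxx.
Qed.

Hypothesis E_bounded_below : bounded_below.

Lemma bounded_below_inj x : E x = 0 -> x = 0.
Proof.
have [c [c_gt0 hc]] := E_bounded_below.
move=> Ex0; apply: hnorm_eq0; apply/eqP; rewrite eq_le hnorm_ge0 andbT.
by rewrite -(pmulr_rle0 _ c_gt0) -(hnorm0 H1) -Ex0 hc.
Qed.

Lemma bounded_below_range_closed u l :
  (forall n, exists x, E x = u n) -> hcvg u l -> exists x, E x = l.
Proof.
have [c [c_gt0 hc]] := E_bounded_below.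
move=> /choice [x Ex] u_cvg; have {}Ex n : E (x n) = u n := Ex n.
have [y y_lim] : exists y, hcvg x y.
  apply: hcomplete => e e_gt0.
  have [k hk] := (hcvgP _ _).1 u_cvg _ (divr_gt0 (mulr_gt0 e_gt0 c_gt0) (ltr0n _ 2)).
  exists k => m n km kn; change (hnorm (x m - x n) < e).
  have := hc (x m - x n); rewrite bounded_opB // !Ex.
  have := ler_hnormB (u m) l (u n); rewrite (hnormBC l (u n)).
  have := hk m km; have := hk n kn; have := splitr (e * c).
  have := hnorm_ge0 (x m - x n).
  move: (hnorm (x m - x n)) (hnorm (u m - u n)) (hnorm (u m - l)) (hnorm (u n - l)).
  move: (e * c / 2) => f a b bm bn; nra.
exists y; apply: hcvg_unique (bounded_op_cvg E_bounded y_lim) _.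
by congr hcvg: u_cvg; apply: funext => n; rewrite /= Ex.
Qed.

Lemma bounded_below_inverse : (forall y, exists x, E x = y) ->
  exists G : H1 -> H0, bounded_op G /\ cancel G E /\ cancel E G.
Proof.
move=> /choice [G EG]; have {}EG : cancel G E := EG.
have [c [c_gt0 hc]] := E_bounded_below.
have GE : cancel E G.
  move=> x; apply/eqP; rewrite -subr_eq0; apply/eqP/bounded_below_inj.
  by rewrite bounded_opB // EG subrr.
exists G; split => //; split.
  move=> a x y; apply/eqP; rewrite -subr_eq0; apply/eqP/bounded_below_inj.
  by rewrite (bounded_opB E_bounded) (bounded_opP E_bounded) !EG subrr.
exists c^-1 => y; change (hnorm (G y) <= c^-1 * hnorm y).
by rewrite -(ler_pM2l c_gt0) mulrA mulfV ?mul1r ?gt_eqF // -{2}(EG y) hc.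
Qed.

End BoundedBelow.

Section SelfAdjoint.
Variables (R : realType) (H : hilbert R).
Local Notation ip := (@hinner R H).

(* The range is closed, and its orthogonal complement is [ker E^* = ker E = 0]. *)
Lemma selfadjoint_bounded_below_surjective (E : H -> H) :
  bounded_op E -> is_adjoint E E -> bounded_below E -> forall y, exists x, E x = y.
Proof.
move=> E_bounded E_sa E_bb y.
have [|||p [[x <-] x_orth]] :=
  orthogonal_projection_exists (S := fun z => exists x, E x = z) _ _ _ y.
- by exists 0; rewrite bounded_op0.
- by move=> a _ _ [x1 <-] [x2 <-]; exists (a *: x1 + x2); rewrite bounded_opP.
- exact: bounded_below_range_closed.
exists x; apply/eqP; rewrite eq_sym -subr_eq0; apply/eqP/(bounded_below_inj E_bb)/hinner_eq0.
by rewrite E_sa; apply: x_orth; exists (E (y - E x)).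
Qed.

Lemma kernel_projection_exists (A : H -> H) : bounded_op A -> exists pi, orth_proj_ker A pi.
Proof.
move=> A_bounded; suff /choice [pi pi_proj] : forall x, exists p, A p = 0 /\
    forall z, A z = 0 -> ip (x - p) z = 0 by exists pi.
apply: (orthogonal_projection_exists (S := fun z => A z = 0)).
- exact: bounded_op0.
- by move=> a x y Ax Ay; rewrite bounded_opP // Ax Ay scaler0 addr0.
- move=> u l Au u_cvg; apply: hcvg_unique (bounded_op_cvg A_bounded u_cvg) _.
  by congr hcvg: (hcvg_cst (0 : H)); apply: funext => n; rewrite /= Au.
Qed.

Section OrthProjKer.
Variables (A pi : H -> H).
Hypotheses (A_bounded : bounded_op A) (pi_proj : orth_proj_ker A pi).

Lemma orth_proj_ker_id z : A z = 0 -> pi z = z.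
Proof.
move=> Az; apply/eqP; rewrite eq_sym -subr_eq0; apply/eqP/hinner_eq0.
by apply: (pi_proj z).2; rewrite bounded_opB // Az (pi_proj z).1 subr0.
Qed.

Lemma orth_proj_ker_idem x : pi (pi x) = pi x.
Proof. exact/orth_proj_ker_id/(pi_proj x).1. Qed.

Lemma orth_proj_ker_adjoint : is_adjoint pi pi.
Proof.
have pi_pi x y : ip (pi x) y = ip (pi x) (pi y).
  rewrite -{1}(subrK (pi y) y) hinnerDr (hinner_conj (y - pi y)).
  by rewrite (pi_proj y).2 ?(pi_proj x).1 // rmorph0 add0r.
move=> x y; rewrite pi_pi -{2}(subrK (pi x) x) hinnerDl.
by rewrite (pi_proj x).2 ?(pi_proj y).1 // add0r.
Qed.

Hypothesis A_sa : is_adjoint A A.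

Lemma orth_proj_ker_range x : pi (A x) = 0.
Proof.
apply: hinner_eq0; have := (pi_proj (A x)).2 _ (pi_proj (A x)).1.
by rewrite hinnerBl A_sa (pi_proj (A x)).1 hinner0r sub0r => /eqP; rewrite oppr_eq0 => /eqP.
Qed.

(* [A x = - pi x] lies in both [ran A] and [ker A = ran pi], which are orthogonal. *)
Lemma selfadjoint_add_orth_proj_ker_inj x : A x + pi x = 0 -> x = 0.
Proof.
move=> /eqP; rewrite addr_eq0 => /eqP Ax.
have : ip (A x) (pi x) = 0 by rewrite A_sa (pi_proj x).1 hinner0r.
rewrite Ax hinnerNl => /eqP; rewrite oppr_eq0 => /eqP /hinner_eq0 pi_x0.
by rewrite -(orth_proj_ker_id (z := x)) // Ax pi_x0 oppr0.
Qed.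

End OrthProjKer.
End SelfAdjoint.

Section OperatorAlgebra.
Variables (R : realType) (L : GOA R).

Lemma L0D (g0 g1 : weight L) (A B : Hs g0 -> Hs g1) :
  L0 A -> L0 B -> L0 (fun x => A x + B x).
Proof.
suff -> : (fun x => A x + B x) = (fun x => 1 *: A x + B x) by apply: L0_lin.
by apply: funext => x; rewrite scale1r.
Qed.

Lemma L0B (g0 g1 : weight L) (A B : Hs g0 -> Hs g1) :
  L0 A -> L0 B -> L0 (fun x => A x - B x).
Proof.
suff -> : (fun x => A x - B x) = (fun x => (-1) *: B x + A x) by move=> *; apply: L0_lin.
by apply: funext => x; rewrite scaleN1r addrC.
Qed.

Lemma LinfD (g0 g1 : weight L) (A B : Hs g0 -> Hs g1) :
  Linf A -> Linf B -> Linf (fun x => A x + B x).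
Proof.
suff -> : (fun x => A x + B x) = (fun x => 1 *: A x + B x) by apply: Linf_lin.
by apply: funext => x; rewrite scale1r.
Qed.

Lemma parametrixD_smoothing (g0 g1 : weight L) (A P : Hs g0 -> Hs g1) (B : Hs g1 -> Hs g0) :
  parametrix A B -> Linf P -> parametrix (fun x => A x + P x) B.
Proof.
move=> [LB [ABinf BAinf]] LP; have B_bounded := L0_bounded LB.
split=> //; split.
  suff -> : (fun y => A (B y) + P (B y) - y) = (fun y => (A (B y) - y) + P (B y)).
    exact: LinfD ABinf (comp_inf0 LP LB).
  by apply: funext => y; rewrite addrAC.
suff -> : (fun x => B (A x + P x) - x) = (fun x => (B (A x) - x) + B (P x)).
  exact: LinfD BAinf (comp_0inf LB LP).
by apply: funext => x; rewrite bounded_opD // addrAC.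
Qed.

Variable g : weight L.
Hypothesis smoothing_sandwich : forall R0 R1 T : Hs g -> Hs g,
  Linf R0 -> Linf R1 -> bounded_op T -> Linf (fun x => R1 (T (R0 x))).

(* With [K1 = B E - 1] and [K2 = E B - 1]: [G = B - K1 B + K1 G K2]. *)
Lemma parametrix_inverse_L0 (E B G : Hs g -> Hs g) :
  parametrix E B -> bounded_op G -> cancel G E -> cancel E G -> L0 G.
Proof.
move=> [LB [K2inf K1inf]] G_bounded EG GE; have B_bounded := L0_bounded LB.
have K1GK2 := smoothing_sandwich K2inf K1inf G_bounded.
have K1B := Linf_L0 (comp_inf0 K1inf LB).
suff -> : G = (fun y => (B y - (B (E (B y)) - B y))
                        + (B (E (G (E (B y) - y))) - G (E (B y) - y))).
  exact: L0D (L0B LB K1B) (Linf_L0 K1GK2).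
apply: funext => y; rewrite EG (bounded_opB B_bounded) (bounded_opB G_bounded) GE.
by rewrite addrA subrK opprB addrC subrK.
Qed.

Hypothesis kernel_projection_smoothing : forall A pi : Hs g -> Hs g,
  L0 A -> is_adjoint A A -> fredholm A -> orth_proj_ker A pi -> Linf pi.

Lemma selfadjoint_fredholm_inverse_mod_kernel (A B0 : Hs g -> Hs g) :
  L0 A -> is_adjoint A A -> fredholm A -> parametrix A B0 ->
  exists B pi : Hs g -> Hs g, orth_proj_ker A pi /\ L0 B /\
    (forall x, A (B x) = x - pi x) /\ (forall x, B (A x) = x - pi x).
Proof.
move=> LA A_sa A_fred A_par; have A_bounded := L0_bounded LA.
have [pi pi_proj] := kernel_projection_exists A_bounded.
have Lpi := kernel_projection_smoothing LA A_sa A_fred pi_proj.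
have pi_bounded := L0_bounded (Linf_L0 Lpi).
pose E x := A x + pi x.
have E_bounded : bounded_op E := L0_bounded (L0D LA (Linf_L0 Lpi)).
have E_par : parametrix E B0 := parametrixD_smoothing A_par Lpi.
have E_inj := selfadjoint_add_orth_proj_ker_inj A_bounded pi_proj A_sa.
have E_sa : is_adjoint E E.
  by move=> x y; rewrite hinnerDl hinnerDr A_sa (orth_proj_ker_adjoint pi_proj).
have E_bb := bounded_below_of_compact_left_parametrix E_bounded
  (L0_bounded E_par.1) E_inj (Linf_compact E_par.2.2).
have [G [G_bounded [EG GE]]] := bounded_below_inverse E_bounded E_bb
  (selfadjoint_bounded_below_surjective E_bounded E_sa E_bb).
have pi_idem := orth_proj_ker_idem A_bounded pi_proj.
have pi_E x : pi (E x) = pi x.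
  by rewrite bounded_opD // (orth_proj_ker_range pi_proj) // add0r pi_idem.
have E_pi x : E (pi x) = pi x by rewrite /E (pi_proj x).1 add0r pi_idem.
exists (fun x => G x - pi x), pi; split=> //; split.
  exact: L0B (parametrix_inverse_L0 E_par G_bounded EG GE) (Linf_L0 Lpi).
split=> x.
  have pi_G : pi (G x) = pi x by rewrite -pi_E EG.
  rewrite (bounded_opB A_bounded) (pi_proj x).1 subr0.
  by rewrite -[A (G x)](addrK (pi (G x))) -/(E (G x)) EG pi_G.
have G_pi : G (pi x) = pi x by rewrite -{1}(E_pi x) GE.
rewrite (orth_proj_ker_range pi_proj) // subr0 -[A x](addrK (pi x)) -/(E x).
by rewrite (bounded_opB G_bounded) GE G_pi.
Qed.

End OperatorAlgebra.

Theorem mainTheorem10 (R : realType) (L : GOA R) :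
  fredholm_property L ->
  (* (a) *)
  (forall (g : weight L) (A : Hs g -> Hs g) (pi : Hs g -> Hs g),
      L0 A -> is_adjoint A A -> fredholm A -> orth_proj_ker A pi -> Linf pi) ->
  (* (b) *)
  (forall (g : weight L) (R0 R1 T : Hs g -> Hs g),
      Linf R0 -> Linf R1 -> bounded_op T -> Linf (fun x => R1 (T (R0 x)))) ->
  extended_fredholm_property L.
Proof.
move=> fred ker_proj_smoothing sandwich; split=> // g A LA A_sa A_fred.
have [B0 A_par] := (fred g g A LA).2 A_fred.
exact: (selfadjoint_fredholm_inverse_mod_kernel (sandwich g) (ker_proj_smoothing g)
  LA A_sa A_fred A_par).
Qed.
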